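(* Let $\alpha_0\subset\alpha$ meet every orbit of $\tau$ in exactly one element. A section $u=\{u(a)\in R_a\pi\}_{a\in\alpha_0}$ is the restriction to $\alpha_0$ of the self-linking function $u^w$ of some nanoword $w$ over $\alpha$ if and only if it is skew-symmetric, i.e. $\delta_a(u(a))=\partial_a(u(a))=0$ for all $a\in\alpha_0$ and $\partial_a(u(b))+\partial_b(u(a))=0$ for all $a,b\in\alpha_0$.
   Context: Fix a set $\alpha$ with an involution $\tau$. A nanoword over $\alpha$ is a pair $(\mathcal A,w)$ with $\mathcal A$ a finite set with a map $A\mapsto|A|\in\alpha$ and $w$ a word in which each letter of $\mathcal A$ occurs exactly twice. Let $\pi$ be the multiplicative abelian group generated by the elements of $\alpha$ with relations $a\,\tau(a)=1$ ($a\in\alpha$). For $A,B\in\mathcal A$ let $n_w(A,B)=1$ if $w=\cdots A\cdots B\cdots A\cdots B\cdots$, $-1$ if $w=\cdots B\cdots A\cdots B\cdots A\cdots$, and $0$ otherwise; $[A]_w=\prod_{B}|B|^{n_w(A,B)}\in\pi$; $[a]_w=\sum_{A:\,[A]_w\neq1,\,|A|=a}[A]_w\in\mathbb Z\pi$. For $a\in\alpha$ let $R_a=\mathbb Z/2\mathbb Z$ if $\tau(a)=a$ and $R_a=\mathbb Z$ otherwise. The self-linking function of $w$ is $u^w(a)=[a]_w\bmod 2\in R_a\pi$ if $\tau(a)=a$ and $u^w(a)=[a]_w-[\tau(a)]_w\in R_a\pi$ if $\tau(a)\neq a$. A section is any family $u=\{u(a)\in R_a\pi\}_{a\in\alpha_0}$.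 Every element of $\pi$ is written $\prod_{b\in\alpha_0}b^{m_b}$ with $m_b\in\mathbb Z$ determined uniquely if $\tau(b)\ne b$ and modulo 2 if $\tau(b)=b$. For $a,b\in\alpha_0$ let $R_{a,b}=\mathbb Z$ if $\tau(a)\neq a$ and $\tau(b)\neq b$, and $R_{a,b}=\mathbb Z/2\mathbb Z$ otherwise. Let $\delta_a:R_a\pi\to R_a$ be the additive map sending $1\in\pi$ to $1$ and all other elements of $\pi$ to $0$, and $\partial_b:R_a\pi\to R_{a,b}$ the additive map sending $\prod_{c\in\alpha_0}c^{m_c}$ to $m_b$. *)

From mathcomp Require Import all_boot all_order all_algebra.
Set Implicit Arguments. Unset Strict Implicit. Unset Printing Implicit Defensive.
Import GRing.Theory Num.Theory.
Local Open Scope ring_scope.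

(* Coefficient rings R_a and R_{a,b}, represented by integer
   representatives: equality in R_a is equality in Z if tau a <> a and
   congruence mod 2 if tau a = a.                                          *)
Definition eqR (alpha : finType) (tau : alpha -> alpha) (a : alpha) (x y : int) : bool :=
  if tau a == a then (x == y %[mod 2])%Z else x == y.

Definition eqRR (alpha : finType) (tau : alpha -> alpha) (a b : alpha) (x y : int) : bool :=
  if (tau a != a) && (tau b != b) then x == y else (x == y %[mod 2])%Z.

(* Elements of pi are written prod_{b in alpha0} b^{m_b}; we represent them
   by exponent vectors m : alpha -> int (entries outside alpha0 ignored). *)
Definition piT (alpha : finType) := {ffun alpha -> int}.

Definition pi_eq (alpha : finType) (tau : alpha -> alpha) (alpha0 : {set alpha})
  (m m' : piT alpha) : bool :=
  [forall b in alpha0, eqR tau b (m b) (m' b)].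

Definition pi_one (alpha : finType) : piT alpha := [ffun => 0].

(* the element a of pi, for a in alpha, written in the alpha0-normal form *)
Definition gen (alpha : finType) (tau : alpha -> alpha) (alpha0 : {set alpha})
  (a : alpha) : piT alpha :=
  [ffun b => if a \in alpha0 then ((b == a) : nat)%:Z else - ((b == tau a) : nat)%:Z].

(* Elements of the group ring R_a pi, as formal finite sums sum c_i g_i. *)
Definition grpring (alpha : finType) := seq (piT alpha * int).

Definition coef (alpha : finType) (tau : alpha -> alpha) (alpha0 : {set alpha})
  (x : grpring alpha) (g : piT alpha) : int :=
  \sum_(e <- x | pi_eq tau alpha0 e.1 g) e.2.

Definition gr_eq (alpha : finType) (tau : alpha -> alpha) (alpha0 : {set alpha})
  (a : alpha) (x y : grpring alpha) : Prop :=
  forall g : piT alpha, eqR tau a (coef tau alpha0 x g) (coef tau alpha0 y g).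

Definition delta (alpha : finType) (tau : alpha -> alpha) (alpha0 : {set alpha})
  (x : grpring alpha) : int := coef tau alpha0 x (pi_one alpha).

Definition partial (alpha : finType) (b : alpha) (x : grpring alpha) : int :=
  \sum_(e <- x) e.2 * e.1 b.

(* Nanowords: a finite set A (a finType), a map lab : A -> alpha, and a
   word w in which each letter of A occurs exactly twice. *)
Definition is_nanoword (A : finType) (w : seq A) : bool :=
  [forall X : A, count_mem X w == 2%N].

Definition nw (A : finType) (w : seq A) (X Y : A) : int :=
  (subseq [:: X; Y; X; Y] w : nat)%:Z - (subseq [:: Y; X; Y; X] w : nat)%:Z.

Definition letter_class (alpha : finType) (tau : alpha -> alpha) (alpha0 : {set alpha})
  (A : finType) (lab : A -> alpha) (w : seq A) (X : A) : piT alpha :=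
  [ffun b => \sum_(Y : A) nw w X Y * gen tau alpha0 (lab Y) b].

Definition bracket (alpha : finType) (tau : alpha -> alpha) (alpha0 : {set alpha})
  (A : finType) (lab : A -> alpha) (w : seq A) (a : alpha) : grpring alpha :=
  [seq (letter_class tau alpha0 lab w X, 1)
     | X <- [seq X <- enum A | (lab X == a)
                 && ~~ pi_eq tau alpha0 (letter_class tau alpha0 lab w X) (pi_one alpha)]].

Definition selflink (alpha : finType) (tau : alpha -> alpha) (alpha0 : {set alpha})
  (A : finType) (lab : A -> alpha) (w : seq A) (a : alpha) : grpring alpha :=
  if tau a == a then bracket tau alpha0 lab w a
  else bracket tau alpha0 lab w a
       ++ [seq (e.1, - e.2) | e <- bracket tau alpha0 lab w (tau a)].

Definition realizable (alpha : finType) (tau : alpha -> alpha) (alpha0 : {set alpha})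
  (u : alpha -> grpring alpha) : Prop :=
  exists (A : finType) (lab : A -> alpha) (w : seq A),
    is_nanoword w /\
    forall a, a \in alpha0 -> gr_eq tau alpha0 a (u a) (selflink tau alpha0 lab w a).

Definition skew_symmetric (alpha : finType) (tau : alpha -> alpha) (alpha0 : {set alpha})
  (u : alpha -> grpring alpha) : Prop :=
  (forall a, a \in alpha0 ->
     eqR tau a (delta tau alpha0 (u a)) 0 /\ eqRR tau a a (partial a (u a)) 0) /\
  (forall a b, a \in alpha0 -> b \in alpha0 ->
     eqRR tau a b (partial a (u b) + partial b (u a)) 0).

(* Necessity: u(a) in R_a pi determines delta_a(u(a)) in R_a and d_b(u(a)) in
   R_{a,b}, so one may compute on u^w itself.  Letters X with [X]_w = 1 contribute
   nothing, and d_b u^w(a) is, modulo R_{a,b}, the form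
   sum_{X,Y} e_a(X) n_w(X,Y) e_b(Y), where e_a(X) is +1 if |X| = a, -1 if
   |X| = tau(a) <> a and 0 otherwise; this form is antisymmetric because n_w is.
   Sufficiency: the functions (a, x) |-> (coefficient of x <> 1 in u^w(a)) realized
   by nanowords form a group modulo R_a: concatenating words adds them, and
   reversing a word while relabelling it by tau negates them.  In the word
   Y_1 ... Y_k X Y_k ... Y_1 X the letter X is negatively linked to every Y_i and
   the Y_i are pairwise unlinked, so [X] = (|Y_1| ... |Y_k|)^-1 and [Y_i] = |X|.
   With |X| = h and [X] = g it realizes (a, x) |-> [h = a][g = x] - d_a(g)[h = x].
   Summing over the monomials of u realizes u up to sum_c d_a(u(c)) [c = x], and
   the cases g = b in alpha0 cancel this error thanks to skew-symmetry. *)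

From Pilot Require Import Defs.
From mathcomp Require Import all_boot all_order all_algebra.
From mathcomp Require Import ring zify.
Set Implicit Arguments. Unset Strict Implicit. Unset Printing Implicit Defensive.
Import GRing.Theory Num.Theory.
Local Open Scope ring_scope.

Section FilterPred.
Variable T : eqType.
Implicit Types (s : seq T) (X Y Z : T).

Lemma filter_pred1_nseq s X : [seq Z <- s | pred1 X Z] = nseq (count_mem X s) X.
Proof.
by rewrite -size_filter; apply/all_pred1P/allP => Z; rewrite mem_filter => /andP[].
Qed.

Lemma filter_pred2_notin s X Y :
  X \notin s -> Y \notin s -> [seq Z <- s | pred2 X Y Z] = [::].
Proof.
move=> Xs Ys; rewrite -(filter_pred0 s); apply: eq_in_filter => Z Zs /=.
by rewrite (negbTE (memPn Xs Z Zs)) (negbTE (memPn Ys Z Zs)).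
Qed.

Lemma filter_pred2_notin_r s X Y :
  Y \notin s -> [seq Z <- s | pred2 X Y Z] = [seq Z <- s | pred1 X Z].
Proof.
by move=> Ys; apply: eq_in_filter => Z Zs /=; rewrite (negbTE (memPn Ys Z Zs)) orbF.
Qed.

End FilterPred.

Lemma dvdz_subC (m x y : int) : (m %| x - y)%Z = (m %| y - x)%Z.
Proof. by rewrite -opprB rpredN. Qed.

Lemma dvdz_sub_trans (m x y z : int) : (m %| x - y)%Z -> (m %| y - z)%Z -> (m %| x - z)%Z.
Proof. by move=> mxy myz; rewrite -(subrKA y); apply: rpredD. Qed.

Definition b2z (b : bool) : int := (b : nat)%:Z.

Section LinkingNumbers.
Variable A : finType.
Implicit Types (w s : seq A) (X Y Z : A).

Lemma nw_filter w X Y : nw w X Y = nw [seq Z <- w | pred2 X Y Z] X Y.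
Proof. by rewrite /nw !subseq_filter /= !eqxx /= !orbT. Qed.

Lemma nw_antisym w X Y : nw w Y X = - nw w X Y.
Proof. by rewrite /nw opprB. Qed.

Lemma nw_self w X : nw w X X = 0.
Proof. by rewrite /nw subrr. Qed.

Lemma nw_rev w X Y : nw (rev w) X Y = - nw w X Y.
Proof.
rewrite /nw -(subseq_rev [:: X; Y; X; Y]) -(subseq_rev [:: Y; X; Y; X]) revK.
by rewrite opprB.
Qed.

Lemma nw_palindrome w X Y : rev w = w -> nw w X Y = 0.
Proof. by move=> ww; have := nw_rev w X Y; rewrite ww; lia. Qed.

Lemma nw_YXYX X Y : X != Y -> nw [:: Y; X; Y; X] X Y = -1.
Proof.
move=> /negbTE nXY; have nYX : (Y == X) = false by rewrite eq_sym.
by rewrite /nw /=; do 6 rewrite ?eqxx ?nXY ?nYX /=.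
Qed.

Lemma nw_XXYY X Y : nw [:: X; X; Y; Y] X Y = 0.
Proof.
have [->|/negbTE nXY] := eqVneq X Y; first exact: nw_self.
have nYX : (Y == X) = false by rewrite eq_sym.
by rewrite /nw /=; do 6 rewrite ?eqxx ?nXY ?nYX /=.
Qed.

Lemma nw_catl w1 w2 X Y : X \notin w2 -> Y \notin w2 -> nw (w1 ++ w2) X Y = nw w1 X Y.
Proof.
move=> Xw2 Yw2; rewrite nw_filter filter_cat (filter_pred2_notin (s := w2)) //.
by rewrite cats0 -nw_filter.
Qed.

Lemma nw_catr w1 w2 X Y : X \notin w1 -> Y \notin w1 -> nw (w1 ++ w2) X Y = nw w2 X Y.
Proof. by move=> Xw1 Yw1; rewrite nw_filter filter_cat filter_pred2_notin // -nw_filter. Qed.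

Lemma nw_cat_apart w1 w2 X Y :
    X \notin w2 -> Y \notin w1 -> count_mem X w1 = 2%N -> count_mem Y w2 = 2%N ->
  nw (w1 ++ w2) X Y = 0.
Proof.
move=> Xw2 Yw1 cX cY; rewrite nw_filter filter_cat (filter_pred2_notin_r X Yw1).
have -> : [seq Z <- w2 | pred2 X Y Z] = [seq Z <- w2 | pred1 Y Z].
  by rewrite -(filter_pred2_notin_r Y Xw2); apply: eq_filter => Z; exact: orbC.
by rewrite !filter_pred1_nseq cX cY; exact: nw_XXYY.
Qed.

Lemma nw_map_inj (B : finType) (f : A -> B) w X Y :
  injective f -> nw (map f w) (f X) (f Y) = nw w X Y.
Proof.
move=> f_inj; have sub_map s : subseq (map f s) (map f w) = subseq s w.
  apply/idP/idP; last exact: map_subseq.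
  case/subseqP => m sz e; apply/subseqP; exists m; first by rewrite sz size_map.
  by apply: (inj_map f_inj); rewrite e map_mask.
by rewrite /nw -!sub_map.
Qed.

Definition nest_word s X := s ++ X :: rev s ++ [:: X].

Lemma count_nest_word_head s X : X \notin s -> count_mem X (nest_word s X) = 2%N.
Proof.
by move=> /count_memPn Xs; rewrite /nest_word count_cat /= count_cat count_rev Xs /= eqxx.
Qed.

Lemma count_nest_word s X Y :
  uniq s -> Y \in s -> X \notin s -> count_mem Y (nest_word s X) = 2%N.
Proof.
move=> us Ys Xs; have /negbTE XY : X != Y by rewrite eq_sym (memPn Xs).
by rewrite /nest_word count_cat /= count_cat count_rev (count_uniq_mem _ us) Ys XY /= XY.
Qed.

Lemma nw_nest_word_head s X Y :
  uniq s -> X \notin s -> Y \in s -> nw (nest_word s X) X Y = -1.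
Proof.
move=> us Xs Ys; have XY : X != Y by rewrite eq_sym (memPn Xs).
have sXY : [seq Z <- s | pred2 X Y Z] = [:: Y].
  rewrite -(filter_pred1_uniq us Ys); apply: eq_in_filter => Z Zs /=.
  by rewrite (negbTE (memPn Xs Z Zs)).
rewrite nw_filter /nest_word filter_cat /= filter_cat filter_rev sXY /= eqxx.
exact: nw_YXYX.
Qed.

Lemma nw_nest_word_tail s X Y Z : Y != X -> Z != X -> nw (nest_word s X) Y Z = 0.
Proof.
move=> YX ZX; rewrite nw_filter; apply: nw_palindrome.
rewrite /nest_word filter_cat /= filter_cat filter_rev /=.
by rewrite eq_sym (negbTE YX) eq_sym (negbTE ZX) cats0 rev_cat revK.
Qed.

End LinkingNumbers.

Section DisjointUnion.
Variables (A1 A2 : finType) (w1 : seq A1) (w2 : seq A2).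
Hypotheses (w1_nano : is_nanoword w1) (w2_nano : is_nanoword w2).
Implicit Types (X : A1) (Y : A2).

Definition union_word : seq (A1 + A2) := map inl w1 ++ map inr w2.

Lemma inl_notin_inr X : inl X \notin (map inr w2 : seq (A1 + A2)).
Proof. by apply/mapP => -[]. Qed.

Lemma inr_notin_inl Y : inr Y \notin (map inl w1 : seq (A1 + A2)).
Proof. by apply/mapP => -[]. Qed.

Lemma count_map_inl X : count_mem (inl X) (map inl w1 : seq (A1 + A2)) = count_mem X w1.
Proof. by rewrite count_map. Qed.

Lemma count_map_inr Y : count_mem (inr Y) (map inr w2 : seq (A1 + A2)) = count_mem Y w2.
Proof. by rewrite count_map. Qed.

Lemma union_word_nano : is_nanoword union_word.
Proof.
apply/forallP => -[X | Y]; rewrite /union_word count_cat.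
  by rewrite count_map_inl (count_memPn (inl_notin_inr X)) addn0 (eqP (forallP w1_nano X)).
by rewrite count_map_inr (count_memPn (inr_notin_inl Y)) (eqP (forallP w2_nano Y)).
Qed.

Lemma nw_union_inl X X' : nw union_word (inl X) (inl X') = nw w1 X X'.
Proof. by rewrite nw_catl ?inl_notin_inr // nw_map_inj //; apply: inl_inj. Qed.

Lemma nw_union_inr Y Y' : nw union_word (inr Y) (inr Y') = nw w2 Y Y'.
Proof. by rewrite nw_catr ?inr_notin_inl // nw_map_inj //; apply: inr_inj. Qed.

Lemma nw_union_inlr X Y : nw union_word (inl X) (inr Y) = 0.
Proof.
rewrite nw_cat_apart ?inl_notin_inr ?inr_notin_inl ?count_map_inl ?count_map_inr //.
  exact: eqP (forallP w1_nano X).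
exact: eqP (forallP w2_nano Y).
Qed.

End DisjointUnion.

Section GroupRing.
Variables (alpha : finType) (tau : alpha -> alpha) (alpha0 : {set alpha}).
Hypothesis tauK : involutive tau.
Hypothesis alpha0_orbit : forall a : alpha, #|alpha0 :&: [set a; tau a]| = 1%N.

Local Notation peq := (pi_eq tau alpha0).
Local Notation coef := (coef tau alpha0).
Local Notation gen := (gen tau alpha0).
Local Notation one := (pi_one alpha).

Definition modR a : int := if tau a == a then 2 else 0.
Definition modRR a b : int := if (tau a != a) && (tau b != b) then 0 else 2.

Lemma eqR_dvd a x y : eqR tau a x y = (modR a %| x - y)%Z.
Proof.
rewrite /eqR /modR; case: ifP => _; first by rewrite eqz_mod_dvd.
by rewrite dvd0z subr_eq0.
Qed.

Lemma eqRR_dvd a b x y : eqRR tau a b x y = (modRR a b %| x - y)%Z.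
Proof.
rewrite /eqRR /modRR; case: ifP => _; last by rewrite eqz_mod_dvd.
by rewrite dvd0z subr_eq0.
Qed.

Lemma modRRC a b : modRR a b = modRR b a.
Proof. by rewrite /modRR andbC. Qed.

Lemma modRR_dvdl a b : (modRR a b %| modR a)%Z.
Proof. by rewrite /modRR /modR; case: (tau a == a); rewrite ?dvdzz ?dvdz0. Qed.

Lemma modRR_dvdr a b : (modRR a b %| modR b)%Z.
Proof. by rewrite modRRC modRR_dvdl. Qed.

Lemma peq_refl g : peq g g.
Proof. by apply/forall_inP => b _; rewrite eqR_dvd subrr dvdz0. Qed.

Lemma peq_sym g h : peq g h = peq h g.
Proof. by apply/forall_inP/forall_inP => gh b /gh; rewrite !eqR_dvd dvdz_subC. Qed.

Lemma peq_trans g h k : peq g h -> peq h k -> peq g k.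
Proof.
move=> /forall_inP gh /forall_inP hk; apply/forall_inP => b b0.
by move: (gh b b0) (hk b b0); rewrite !eqR_dvd; apply: dvdz_sub_trans.
Qed.

Lemma peq_transl g h k : peq g h -> peq g k = peq h k.
Proof.
move=> gh; apply/idP/idP; last exact: peq_trans.
by apply: peq_trans; rewrite peq_sym.
Qed.

Definition linext (phi : piT alpha -> int) (x : grpring alpha) : int :=
  \sum_(e <- x) e.2 * phi e.1.

Lemma coefE x g : coef x g = linext (fun h => b2z (peq h g)) x.
Proof.
by rewrite /Defs.coef big_mkcond; apply: eq_bigr => e _; case: ifP; rewrite ?mulr1 ?mulr0.
Qed.

Lemma partialE b x : partial b x = linext (fun h => h b) x.
Proof. by []. Qed.

Lemma linext_cat phi x y : linext phi (x ++ y) = linext phi x + linext phi y.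
Proof. by rewrite /linext big_cat. Qed.

Lemma linext_opp phi x : linext phi [seq (e.1, - e.2) | e <- x] = - linext phi x.
Proof. by rewrite /linext big_map -sumrN; apply: eq_bigr => e _; rewrite mulNr. Qed.

Lemma coef_peq x g h : peq g h -> coef x g = coef x h.
Proof.
by move=> gh; rewrite !coefE; apply: eq_bigr => e _; rewrite peq_sym (peq_transl _ gh) peq_sym.
Qed.

(* A letter labelled [y] enters [u^w(a)] with sign [label_sign a y]; by
   [gen_label_sign] this is also the exponent of [a] in [y] viewed in [pi]. *)
Definition label_sign a y : int :=
  b2z (y == a) - (if tau a == a then 0 else b2z (y == tau a)).

Lemma label_sign_tau a y : (modR a %| label_sign a (tau y) + label_sign a y)%Z.
Proof.
rewrite /label_sign /modR (inj_eq (can_inj tauK)) (inv_eq tauK).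
case: ifP => [/eqP taua | _]; last by rewrite addrC addrA subrK subrr dvdz0.
by rewrite !subr0 taua; case: (y == a); rewrite ?dvdzz ?dvdz0.
Qed.

Lemma alpha0_fixed a : a \in alpha0 -> tau a \in alpha0 -> tau a = a.
Proof.
move=> a0 ta0; apply/eqP; apply: contraT => ta_a.
have := alpha0_orbit a; rewrite (setIidPr _) ?cards2 1?eq_sym ?(negbTE ta_a) //.
by apply/subsetP => z; rewrite !inE => /orP[]/eqP->.
Qed.

Lemma label_sign_alpha0 a c : a \in alpha0 -> c \in alpha0 -> label_sign a c = b2z (c == a).
Proof.
move=> a0 c0; rewrite /label_sign; case: ifP => [_ | ta_a]; first by rewrite subr0.
suff /negbTE -> : c != tau a by rewrite subr0.
by apply: contraFneq ta_a => c_ta; rewrite alpha0_fixed // -c_ta.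
Qed.

Lemma gen_label_sign y b : b \in alpha0 -> gen y b = label_sign b y.
Proof.
move=> b0; rewrite /Defs.gen ffunE; case: ifP => y0.
  by rewrite label_sign_alpha0 // eq_sym.
rewrite /label_sign; have /negbTE -> : y != b by apply: contraFneq y0 => ->.
rewrite sub0r; case: ifP => [/eqP tb_b | _]; last by rewrite (eq_sym b) (inv_eq tauK).
suff /negbTE -> : b != tau y by [].
by apply: contraFneq y0 => b_ty; rewrite -[y]tauK -b_ty tb_b.
Qed.

Section SelfLinking.
Variables (A : finType) (lab : A -> alpha) (w : seq A).
Local Notation cls := (letter_class tau alpha0 lab w).

Lemma letter_classE X b :
  b \in alpha0 -> cls X b = \sum_(Y : A) nw w X Y * label_sign b (lab Y).
Proof. by move=> b0; rewrite ffunE; apply: eq_bigr => Y _; rewrite gen_label_sign. Qed.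

Lemma linext_bracket phi c :
  linext phi (bracket tau alpha0 lab w c) =
  \sum_(X : A) b2z (lab X == c) * (b2z (~~ peq (cls X) one) * phi (cls X)).
Proof.
rewrite /linext big_map big_filter big_enum_cond /= big_mkcond; apply: eq_bigr => X _ /=.
by case: (lab X == c); case: (peq _ _); rewrite /= ?mul1r ?mul0r.
Qed.

Lemma linext_selflink phi a :
  linext phi (selflink tau alpha0 lab w a) =
  \sum_(X : A) label_sign a (lab X) * (b2z (~~ peq (cls X) one) * phi (cls X)).
Proof.
rewrite /selflink /label_sign; case: ifP => _.
  by rewrite linext_bracket; apply: eq_bigr => X _; rewrite subr0.
rewrite linext_cat linext_opp !linext_bracket -sumrB.
by apply: eq_bigr => X _; rewrite mulrBl.
Qed.

Definition selflink_coef a x := \sum_(X : A) label_sign a (lab X) * b2z (peq (cls X) x).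

Lemma coef_selflink a x :
  ~~ peq x one -> coef (selflink tau alpha0 lab w a) x = selflink_coef a x.
Proof.
move=> x1; rewrite coefE linext_selflink; apply: eq_bigr => X _.
case Xx: (peq (cls X) x); last by rewrite !mulr0.
by rewrite (peq_transl _ Xx) (negbTE x1) mul1r.
Qed.

Lemma coef_selflink_one a g : peq g one -> coef (selflink tau alpha0 lab w a) g = 0.
Proof.
move=> g1; rewrite coefE linext_selflink big1 // => X _.
case Xg: (peq (cls X) g); last by rewrite !mulr0.
by rewrite (peq_trans Xg g1) !mulr0.
Qed.

Definition linking_form a b :=
  \sum_(X : A) \sum_(Y : A) label_sign a (lab X) * (nw w X Y * label_sign b (lab Y)).

Lemma linking_formC a b : linking_form a b = - linking_form b a.
Proof.
rewrite /linking_form exchange_big -sumrN; apply: eq_bigr => X _.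
by rewrite -sumrN; apply: eq_bigr => Y _; rewrite nw_antisym; ring.
Qed.

Lemma partial_selflink a b : b \in alpha0 ->
  (modRR a b %| partial b (selflink tau alpha0 lab w a) - linking_form a b)%Z.
Proof.
move=> b0; rewrite partialE linext_selflink /linking_form -sumrB rpred_sum // => X _.
rewrite -mulr_sumr -mulrBr dvdz_mull //.
have <- : cls X b = \sum_(Y : A) nw w X Y * label_sign b (lab Y) by rewrite letter_classE.
case: (boolP (peq (cls X) one)) => [X1 | _]; last by rewrite mul1r subrr dvdz0.
rewrite mul0r sub0r rpredN; apply: dvdz_trans (modRR_dvdr a b) _.
by move/forall_inP: X1 => /(_ b b0); rewrite eqR_dvd [X in _ - X]ffunE subr0.
Qed.

End SelfLinking.

(** * Necessity *)

Lemma linext_dvd (m : int) phi x :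
    (forall g h, peq g h -> (m %| phi g - phi h)%Z) ->
    (forall g, (m %| coef x g)%Z) ->
  (m %| linext phi x)%Z.
Proof.
move=> phi_peq; have [n] := ubnP (size x); elim: n x => // n IH [|e0 x'] //= x_n x_m.
  by rewrite /linext big_nil dvdz0.
set x := e0 :: x' in x_m *; pose P (e : piT alpha * int) := peq e.1 e0.1.
rewrite /linext (bigID P) /=; apply: rpredD.
  have -> : \sum_(e <- x | P e) e.2 * phi e.1 =
            \sum_(e <- x | P e) e.2 * (phi e.1 - phi e0.1) + coef x e0.1 * phi e0.1.
    by rewrite /Defs.coef mulr_suml -big_split; apply: eq_bigr => e _ /=; ring.
  apply: rpredD; last exact: dvdz_mulr.
  by apply: rpred_sum => e Pe; apply/dvdz_mull/phi_peq.
rewrite -big_filter; apply: IH => [|g].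
  by rewrite /= /P peq_refl /= size_filter (leq_ltn_trans (count_size _ _)).
rewrite /Defs.coef big_filter_cond /=; case: (boolP (peq g e0.1)) => g_e0.
  rewrite big_pred0 ?dvdz0 // => e.
  by case e_g: (peq e.1 g); rewrite ?andbF // andbT /P (peq_trans e_g g_e0).
rewrite (eq_bigl (fun e => pi_eq tau alpha0 e.1 g)) ?x_m // => e /=.
by case e_g: (peq e.1 g); rewrite ?andbF ?andbT // /P (peq_transl _ e_g).
Qed.

Lemma partial_gr_eq a b x y : b \in alpha0 ->
  gr_eq tau alpha0 a x y -> (modRR a b %| partial b x - partial b y)%Z.
Proof.
move=> b0 xy; rewrite !partialE -linext_opp -linext_cat.
apply: linext_dvd => [g h /forall_inP/(_ b b0) | g].
  by rewrite eqR_dvd; apply: dvdz_trans (modRR_dvdr a b).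
rewrite coefE linext_cat linext_opp -!coefE.
by apply: dvdz_trans (modRR_dvdl a b) _; rewrite -eqR_dvd.
Qed.

Lemma realizable_skew u : realizable tau alpha0 u -> skew_symmetric tau alpha0 u.
Proof.
case=> A [lab [w [_ u_w]]].
have partial_u a b : a \in alpha0 -> b \in alpha0 ->
    (modRR a b %| partial b (u a) - linking_form lab w a b)%Z.
  move=> a0 b0; apply: dvdz_sub_trans (partial_gr_eq b0 (u_w a a0)) _.
  exact: partial_selflink.
split=> [a a0 | a b a0 b0]; last first.
  have := partial_u a b a0 b0; rewrite modRRC => /(rpredD (partial_u b a b0 a0)).
  rewrite eqRR_dvd subr0 (linking_formC lab w b a) opprK addrACA subrr addr0.
  by rewrite modRRC.
split; last first.
  have lf_aa : linking_form lab w a a = 0 by have := linking_formC lab w a a; lia.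
  by have := partial_u a a a0 a0; rewrite lf_aa eqRR_dvd.
by have := u_w a a0 one; rewrite !eqR_dvd coef_selflink_one ?peq_refl.
Qed.

Definition realizes (A : finType) (lab : A -> alpha) (w : seq A)
    (f : alpha -> piT alpha -> int) :=
  forall a, a \in alpha0 -> forall x, ~~ peq x one ->
    (modR a %| f a x - selflink_coef lab w a x)%Z.

Definition coef_realizable f :=
  exists (A : finType) (lab : A -> alpha) (w : seq A), is_nanoword w /\ realizes lab w f.

Lemma coef_realizable_congr f g : coef_realizable f ->
    (forall a, a \in alpha0 -> forall x, (modR a %| f a x - g a x)%Z) ->
  coef_realizable g.
Proof.
case=> A [lab [w [w_nano f_w]]] fg; exists A, lab, w; split=> // a a0 x x1.
by apply: dvdz_sub_trans (f_w a a0 x x1); rewrite dvdz_subC fg.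
Qed.

Lemma coef_realizable0 : coef_realizable (fun _ _ => 0).
Proof.
exists void, (@of_void alpha), [::]; split; first by apply/forallP => -[].
by move=> a _ x _; rewrite /selflink_coef big1 ?subrr ?dvdz0 // => -[].
Qed.

Section Union.
Variables (A1 A2 : finType) (lab1 : A1 -> alpha) (lab2 : A2 -> alpha).
Variables (w1 : seq A1) (w2 : seq A2).
Hypotheses (w1_nano : is_nanoword w1) (w2_nano : is_nanoword w2).

Definition union_lab (z : A1 + A2) : alpha :=
  match z with inl X => lab1 X | inr Y => lab2 Y end.

Local Notation cls := (letter_class tau alpha0 union_lab (union_word w1 w2)).

Lemma letter_class_inl X : cls (inl X) = letter_class tau alpha0 lab1 w1 X.
Proof.
apply/ffunP => b; rewrite !ffunE big_sumType /= [X in _ + X]big1 ?addr0 => [|Y _].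
  by apply: eq_bigr => X' _; rewrite nw_union_inl.
by rewrite nw_union_inlr // mul0r.
Qed.

Lemma letter_class_inr Y : cls (inr Y) = letter_class tau alpha0 lab2 w2 Y.
Proof.
apply/ffunP => b; rewrite !ffunE big_sumType /= [X in X + _]big1 ?add0r => [|X _].
  by apply: eq_bigr => Y' _; rewrite nw_union_inr.
by rewrite nw_antisym nw_union_inlr // oppr0 mul0r.
Qed.

Lemma selflink_coef_union a x : selflink_coef union_lab (union_word w1 w2) a x =
  selflink_coef lab1 w1 a x + selflink_coef lab2 w2 a x.
Proof.
by rewrite /selflink_coef big_sumType /=; congr (_ + _); apply: eq_bigr => z _;
  rewrite ?letter_class_inl ?letter_class_inr.
Qed.

End Union.

Lemma coef_realizableD f g : coef_realizable f -> coef_realizable g ->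
  coef_realizable (fun a x => f a x + g a x).
Proof.
case=> [A1 [lab1 [w1 [w1_nano f_w1]]]] [A2 [lab2 [w2 [w2_nano g_w2]]]].
exists (A1 + A2)%type, (union_lab lab1 lab2), (union_word w1 w2).
split=> [|a a0 x x1]; first exact: union_word_nano.
rewrite selflink_coef_union // opprD addrACA.
by apply: rpredD; [apply: f_w1 | apply: g_w2].
Qed.

Section Reversal.
Variables (A : finType) (lab : A -> alpha) (w : seq A).

Lemma letter_class_rev X :
  peq (letter_class tau alpha0 (tau \o lab) (rev w) X) (letter_class tau alpha0 lab w X).
Proof.
apply/forall_inP => b b0; rewrite eqR_dvd !letter_classE // -sumrB rpred_sum // => Y _.
by rewrite nw_rev /= mulNr -opprD -mulrDr rpredN dvdz_mull ?label_sign_tau.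
Qed.

Lemma selflink_coef_rev a x :
  (modR a %| selflink_coef (tau \o lab) (rev w) a x + selflink_coef lab w a x)%Z.
Proof.
rewrite /selflink_coef -big_split rpred_sum // => X _ /=.
by rewrite (peq_transl _ (letter_class_rev X)) -mulrDl dvdz_mulr ?label_sign_tau.
Qed.

End Reversal.

Lemma coef_realizableN f : coef_realizable f -> coef_realizable (fun a x => - f a x).
Proof.
case=> A [lab [w [w_nano f_w]]]; exists A, (tau \o lab), (rev w); split=> [|a a0 x x1].
  by apply/forallP => X; rewrite count_rev (forallP w_nano X).
have -> : - f a x - selflink_coef (tau \o lab) (rev w) a x =
  - (f a x - selflink_coef lab w a x) -
    (selflink_coef (tau \o lab) (rev w) a x + selflink_coef lab w a x) by ring.
by rewrite rpredB ?rpredN ?f_w ?selflink_coef_rev.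
Qed.

Lemma coef_realizable_sum (I : Type) (r : seq I) (P : pred I) F :
    (forall i, P i -> coef_realizable (F i)) ->
  coef_realizable (fun a x => \sum_(i <- r | P i) F i a x).
Proof.
move=> F_r; elim: r => [|i r IH].
  by apply: coef_realizable_congr coef_realizable0 _ => a _ x; rewrite big_nil subrr.
case Pi: (P i); last by apply: coef_realizable_congr IH _ => a _ x; rewrite big_cons Pi subrr.
apply: coef_realizable_congr (coef_realizableD (F_r i Pi) IH) _ => a _ x.
by rewrite big_cons Pi subrr.
Qed.

Lemma coef_realizableZ (k : int) f :
  coef_realizable f -> coef_realizable (fun a x => k * f a x).
Proof.
move=> f_r; have nat_r n : coef_realizable (fun a x => n%:Z * f a x).
  elim: n => [|n IH].
    by apply: coef_realizable_congr coef_realizable0 _ => a _ x; rewrite mul0r subrr.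
  apply: coef_realizable_congr (coef_realizableD f_r IH) _ => a _ x.
  by rewrite intS mulrDl mul1r subrr.
case: k => [n | n]; first exact: nat_r.
apply: coef_realizable_congr (coef_realizableN (nat_r n.+1)) _ => a _ x.
by rewrite NegzE mulNr subrr.
Qed.

Lemma coef_realizable_linext (y : grpring alpha) F :
    (forall g, coef_realizable (F g)) ->
  coef_realizable (fun a x => linext (fun g => F g a x) y).
Proof.
by move=> F_r; apply: coef_realizable_sum => e _; apply: coef_realizableZ.
Qed.

Section NestBlock.
Variables (h : alpha) (N : seq alpha).
Local Notation n := (size N).

Definition nest_lab (i : 'I_n.+1) : alpha := nth h (h :: N) i.
Definition nest_tail : seq 'I_n.+1 := [seq lift ord0 j | j <- enum 'I_n].
Definition nest_block : seq 'I_n.+1 := nest_word nest_tail ord0.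

Lemma uniq_nest_tail : uniq nest_tail.
Proof. by rewrite map_inj_uniq ?enum_uniq //; apply: lift_inj. Qed.

Lemma ord0_notin_nest_tail : ord0 \notin nest_tail.
Proof. by apply/mapP => -[j _] /eqP; rewrite (negbTE (neq_lift _ _)). Qed.

Lemma lift_in_nest_tail j : lift ord0 j \in nest_tail.
Proof. by rewrite map_f ?mem_enum. Qed.

Lemma nest_block_nano : is_nanoword nest_block.
Proof.
apply/forallP => i; case: (unliftP ord0 i) => [j -> | ->]; apply/eqP.
  exact: count_nest_word uniq_nest_tail (lift_in_nest_tail j) ord0_notin_nest_tail.
exact: count_nest_word_head ord0_notin_nest_tail.
Qed.

Lemma sum_nest_tail (F : alpha -> int) :
  \sum_(j < n) F (nest_lab (lift ord0 j)) = \sum_(y <- N) F y.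
Proof. by rewrite (big_nth h) big_mkord; apply: eq_bigr => j _; rewrite /nest_lab lift0. Qed.

Local Notation cls := (letter_class tau alpha0 nest_lab nest_block).

Lemma letter_class_nest_head : cls ord0 = [ffun b => - \sum_(y <- N) gen y b].
Proof.
apply/ffunP => b; rewrite !ffunE big_ord_recl nw_self mul0r add0r -sumrN -sum_nest_tail.
apply: eq_bigr => j _; rewrite nw_nest_word_head ?mulN1r //.
  exact: uniq_nest_tail.
 exact: ord0_notin_nest_tail.
exact: lift_in_nest_tail.
Qed.

Lemma letter_class_nest_tail j : cls (lift ord0 j) = gen h.
Proof.
apply/ffunP => b; rewrite ffunE big_ord_recl big1 ?addr0 => [|k _].
  rewrite nw_antisym nw_nest_word_head ?opprK ?mul1r //.
  - exact: uniq_nest_tail.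
  - exact: ord0_notin_nest_tail.
  - exact: lift_in_nest_tail.
by rewrite nw_nest_word_tail ?mul0r // eq_sym neq_lift.
Qed.

Lemma selflink_coef_nest a x :
  selflink_coef nest_lab nest_block a x =
  label_sign a h * b2z (peq [ffun b => - \sum_(y <- N) gen y b] x) +
  (\sum_(y <- N) label_sign a y) * b2z (peq (gen h) x).
Proof.
rewrite /selflink_coef big_ord_recl letter_class_nest_head mulr_suml -sum_nest_tail.
by congr (_ + _); apply: eq_bigr => j _; rewrite letter_class_nest_tail.
Qed.

End NestBlock.

Lemma sum_pick (T : finType) (A : {pred T}) (F : T -> int) b :
  b \in A -> \sum_(c in A) b2z (c == b) * F c = F b.
Proof.
move=> bA; rewrite (bigD1 b) //= eqxx mul1r big1 ?addr0 // => c /andP[_ /negbTE ->].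
by rewrite mul0r.
Qed.

(* The head of a nest block has class the product of the inverses of the tail
   labels; taking [|g c|] tail labels [c] if [g c < 0] and [tau c] otherwise makes
   it [g]. *)
Definition linking_labels (g : piT alpha) : seq alpha :=
  flatten [seq nseq `|g c|%N (if g c < 0 then c else tau c) | c <- enum alpha0].

Lemma sum_linking_labels g b : b \in alpha0 ->
  (modR b %| \sum_(y <- linking_labels g) label_sign b y + g b)%Z.
Proof.
move=> b0; rewrite /linking_labels big_flatten big_map big_enum /= -(sum_pick g b0).
rewrite -big_split rpred_sum //= => c c0; rewrite big_nseq iter_addr_0 -mulr_natr natz.
case: ltrP => [g_neg | g_pos].
  by rewrite ltz0_abs // label_sign_alpha0 // mulrN addNr dvdz0.
by rewrite gez0_abs // -label_sign_alpha0 // -mulrDl dvdz_mulr ?label_sign_tau.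
Qed.

Definition elementary (h : alpha) (g : piT alpha) a x : int :=
  b2z (h == a) * b2z (peq g x) - g a * b2z (peq (gen h) x).

Lemma coef_realizable_elementary h g : h \in alpha0 -> coef_realizable (elementary h g).
Proof.
move=> h0; set N := linking_labels g.
exists _, (@nest_lab h N), (nest_block N); split=> [|a a0 x _]; first exact: nest_block_nano.
have head_g : peq [ffun b => - \sum_(y <- N) gen y b] g.
  apply/forall_inP => b b0; rewrite eqR_dvd ffunE -opprD rpredN.
  by rewrite (eq_bigr _ (fun y _ => gen_label_sign y b0)) sum_linking_labels.
rewrite selflink_coef_nest (peq_transl _ head_g) label_sign_alpha0 // /elementary.
set S := \sum_(y <- N) _; set J := b2z (peq (gen h) x); set I := b2z (h == a) * _.
have -> : I - g a * J - (I + S * J) = - ((S + g a) * J) by ring.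
by rewrite rpredN dvdz_mulr ?sum_linking_labels.
Qed.

(** * Sufficiency *)

Definition precedes (c b : alpha) : bool :=
  if (tau c == c) == (tau b == b) then (enum_rank c < enum_rank b)%N else tau b == b.

Lemma precedes_irr c : precedes c c = false.
Proof. by rewrite /precedes eqxx ltnn. Qed.

Lemma precedesC c b : c != b -> precedes b c = ~~ precedes c b.
Proof.
move=> cb; rewrite /precedes eq_sym; case: ifP => [_ | ].
  by rewrite ltnNge leq_eqVlt val_eqE (inj_eq enum_rank_inj) (negbTE cb).
by case: (tau c == c); case: (tau b == b).
Qed.

Lemma precedes_modR d a : precedes d a -> (modR a %| modRR a d)%Z.
Proof.
by rewrite /precedes /modR /modRR; case: (tau d == d); case: (tau a == a); rewrite ?dvdzz.
Qed.

Lemma modRR_diag a : modRR a a = modR a.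
Proof. by rewrite /modRR /modR andbb; case: (tau a == a). Qed.

Section Sufficiency.
Variable u : alpha -> grpring alpha.
Hypothesis u_skew : skew_symmetric tau alpha0 u.

Local Notation J c x := (b2z (peq (gen c) x)).

(* Each pair {c, b} is corrected from one side only, the one on which
   skew-symmetry provides the congruence needed (see [precedes_modR]). *)
Definition correction c b : int := b2z (precedes c b) * partial c (u b).

Lemma correction_dvd a d : a \in alpha0 -> d \in alpha0 ->
  (modR a %| correction a d - correction d a - partial a (u d))%Z.
Proof.
move=> a0 d0; rewrite /correction; have [-> | da] := eqVneq d a.
  have := (u_skew.1 a a0).2; rewrite eqRR_dvd subr0 modRR_diag.
  by rewrite precedes_irr !mul0r !sub0r rpredN.
rewrite (precedesC da); case: (precedes d a) (@precedes_modR d a) => /= [/(_ isT) dvd_aRR|_].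
  have := u_skew.2 a d a0 d0; rewrite eqRR_dvd subr0 => /(dvdz_trans dvd_aRR).
  by rewrite !mul0r mul1r sub0r -opprD rpredN addrC.
by rewrite mul1r mul0r subr0 subrr dvdz0.
Qed.

Lemma linext_elementary c a x y : linext (fun g => elementary c g a x) y =
  b2z (c == a) * coef y x - partial a y * J c x.
Proof.
rewrite coefE partialE /linext mulr_sumr mulr_suml -sumrB.
by apply: eq_bigr => e _; rewrite /elementary; ring.
Qed.

Lemma sum_elementary_u a x : a \in alpha0 ->
  \sum_(c in alpha0) linext (fun g => elementary c g a x) (u c) =
  coef (u a) x - \sum_(c in alpha0) partial a (u c) * J c x.
Proof.
move=> a0; rewrite -(sum_pick (fun c => coef (u c) x) a0) -sumrB.
by apply: eq_bigr => c _; rewrite linext_elementary.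
Qed.

Lemma sum_elementary_correction a x : a \in alpha0 ->
  \sum_(c in alpha0) \sum_(b in alpha0) correction c b * elementary c (gen b) a x =
  \sum_(d in alpha0) (correction a d - correction d a) * J d x.
Proof.
move=> a0; have -> : \sum_(c in alpha0) \sum_(b in alpha0)
      correction c b * elementary c (gen b) a x =
    \sum_(c in alpha0) (b2z (c == a) * \sum_(b in alpha0) correction c b * J b x) -
    \sum_(c in alpha0) \sum_(b in alpha0) b2z (b == a) * (correction c b * J c x).
  rewrite -sumrB; apply: eq_bigr => c _; rewrite mulr_sumr -sumrB.
  apply: eq_bigr => b b0; rewrite /elementary gen_label_sign // label_sign_alpha0 //.
  by ring.
rewrite sum_pick // [X in _ - X](eq_bigr (fun c => correction c a * J c x)) => [|c _].
  by rewrite -sumrB; apply: eq_bigr => d _; rewrite mulrBl.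
exact: (sum_pick (fun b => correction c b * J c x)).
Qed.

Lemma coef_realizable_u : coef_realizable (fun a x => coef (u a) x).
Proof.
have main : coef_realizable
    (fun a x => \sum_(c in alpha0) linext (fun g => elementary c g a x) (u c)).
  apply: coef_realizable_sum => c c0; apply: coef_realizable_linext => g.
  exact: coef_realizable_elementary.
have corr : coef_realizable (fun a x => \sum_(c in alpha0) \sum_(b in alpha0)
    correction c b * elementary c (gen b) a x).
  apply: coef_realizable_sum => c c0; apply: coef_realizable_sum => b b0.
  exact/coef_realizableZ/coef_realizable_elementary.
apply: coef_realizable_congr (coef_realizableD main corr) _ => a a0 x.
rewrite sum_elementary_u // sum_elementary_correction //.
set P := \sum_(c in alpha0) _; set C := \sum_(d in alpha0) _.
have -> : coef (u a) x - P + C - coef (u a) x = C - P by ring.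
rewrite -sumrB rpred_sum // => d d0; rewrite -mulrBl dvdz_mulr //.
exact: correction_dvd.
Qed.

Lemma skew_realizable : realizable tau alpha0 u.
Proof.
case: coef_realizable_u => A [lab [w [w_nano u_w]]].
exists A, lab, w; split=> // a a0 g; rewrite eqR_dvd.
have [g1 | g1] := boolP (peq g one); last by rewrite coef_selflink //; apply: u_w.
have := (u_skew.1 a a0).1; rewrite eqR_dvd !subr0.
by rewrite coef_selflink_one // subr0 (coef_peq _ g1).
Qed.

End Sufficiency.

End GroupRing.

Theorem theorem6p2 (alpha : finType) (tau : alpha -> alpha) (alpha0 : {set alpha}) :
  involutive tau ->
  (forall a : alpha, #|alpha0 :&: [set a; tau a]| = 1%N) ->
  forall u : alpha -> grpring alpha,
    realizable tau alpha0 u <-> skew_symmetric tau alpha0 u.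
Proof.
move=> tauK alpha0_orbit u; split; first exact: realizable_skew.
exact: skew_realizable.
Qed.
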